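(* Consider the influential bandit problem with $K$ arms, and assume $\max_{i,j}|A_{ij}|\le 1$ and $|\xi^{(t)}|\le1$ for all $t$. Then for every horizon $T\ge K+1$ and every realization of the noise, the Influential LCB algorithm satisfies $$\sum_{t=1}^T l^{(t)}_{i^{(t)}}-\min_{(j_1,\dots,j_T)\in[K]^T}\sum_{t=1}^T l^{(t)}_{j_t}\;\le\;\Big(\tfrac{5K+3}{2}+2\|l^{(1)}\|_\infty\Big)T+\big(2K+2\|l^{(1)}\|_\infty+4\big)\,T\log T,$$ i.e. the regret is $O(KT\log T)$ (natural logarithm).
   Context: Influential bandit problem: there are $K$ arms, an unknown symmetric positive semi-definite interaction matrix $A\in\mathbb{R}^{K\times K}$ and an unknown initial loss vector $l^{(1)}\in\mathbb{R}^K$. At each round $t=1,\dots,T$ the algorithm chooses $i^{(t)}\in[K]$ based on past observations, observes $L^{(t)}=l^{(t)}_{i^{(t)}}+\xi^{(t)}$, and then $l^{(t+1)}_j=l^{(t)}_j+A_{i^{(t)}j}$ for all $j\in[K]$; in the minimum the losses evolve under the same dynamics driven by $j_1,\dots,j_T$. Influential LCB algorithm: initialize $c^{(1)}_i=0$ and $\hat l^{(1)}_i=-\infty$ for all $i\in[K]$. At round $t$, choose $i^{(t)}\in\arg\min_{i\in[K]}(\hat l^{(t)}_i-c^{(t)}_i)$ (any tie-breaking), observe $L^{(t)}$, and set $\hat l^{(t+1)}_{i^{(t)}}=L^{(t)}$, $\hat l^{(t+1)}_i=\hat l^{(t)}_i$ for $i\ne i^{(t)}$; $c^{(t+1)}_{i^{(t)}}=1$,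 $c^{(t+1)}_i=c^{(t)}_i+1$ for $i\ne i^{(t)}$. *)

From HB Require Import structures.
From mathcomp Require Import all_boot all_order all_algebra.
From mathcomp Require Import all_classical all_reals all_analysis.
Set Implicit Arguments. Unset Strict Implicit. Unset Printing Implicit Defensive.
Import Order.TTheory GRing.Theory Num.Theory.
Local Open Scope ring_scope.

(* Rounds are 0-indexed: round t (0 <= t) of the Rocq development is round
   t+1 of the paper. *)

Fixpoint loss (R : realType) (K : nat) (A : 'M[R]_K) (l1 : 'I_K -> R)
  (s : nat -> 'I_K) (t : nat) : 'I_K -> R :=
  match t with
  | 0 => l1
  | t'.+1 => fun j => loss A l1 s t' j + A (s t') j
  end.

Definition obs (R : realType) (K : nat) (A : 'M[R]_K) (l1 : 'I_K -> R)
  (xi : nat -> R) (s : nat -> 'I_K) (t : nat) : R :=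
  loss A l1 s t (s t) + xi t.

Fixpoint lcb_state (R : realType) (K : nat) (A : 'M[R]_K) (l1 : 'I_K -> R)
  (xi : nat -> R) (s : nat -> 'I_K) (t : nat) : ('I_K -> \bar R) * ('I_K -> nat) :=
  match t with
  | 0 => (fun _ => -oo%E, fun _ => 0%N)
  | t'.+1 =>
      let st := lcb_state A l1 xi s t' in
      (fun i => if i == s t' then (obs A l1 xi s t')%:E else st.1 i,
       fun i => if i == s t' then 1%N else (st.2 i).+1)
  end.

Definition lcb_index (R : realType) (K : nat) (A : 'M[R]_K) (l1 : 'I_K -> R)
  (xi : nat -> R) (s : nat -> 'I_K) (t : nat) (i : 'I_K) : \bar R :=
  ((lcb_state A l1 xi s t).1 i - ((lcb_state A l1 xi s t).2 i)%:R%:E)%E.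

(* s is a run of Influential LCB (with some tie-breaking) for the first T
   rounds: at each round the chosen arm minimizes the index. *)
Definition is_lcb_run (R : realType) (K : nat) (A : 'M[R]_K) (l1 : 'I_K -> R)
  (xi : nat -> R) (s : nat -> 'I_K) (T : nat) : Prop :=
  forall t, (t < T)%N -> forall i : 'I_K,
    (lcb_index A l1 xi s t (s t) <= lcb_index A l1 xi s t i)%E.

Definition cum_loss (R : realType) (K : nat) (A : 'M[R]_K) (l1 : 'I_K -> R)
  (s : nat -> 'I_K) (T : nat) : R :=
  \sum_(t < T) loss A l1 s t (s t).

Definition linf (R : realType) (K : nat) (v : 'I_K -> R) : R :=
  \big[Num.max/0]_(i < K) `|v i|.

From HB Require Import structures.
From mathcomp Require Import all_boot all_order all_algebra.
From mathcomp Require Import all_classical all_reals all_analysis.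
From mathcomp Require Import ring lra.
Set Implicit Arguments. Unset Strict Implicit. Unset Printing Implicit Defensive.
Import Order.TTheory GRing.Theory Num.Theory.
Local Open Scope ring_scope.

(* Let n_t be the row vector of pull counts after t rounds.  The loss vector at
   round t is l1 + n_t A, hence the cumulative loss of an arm sequence is
   sum_t l1(i_t) + (n_T A n_T^T - sum_t A_{i_t i_t}) / 2, and the regret is
   controlled by n_T A n_T^T - m_T A m_T^T for the comparator counts m_T.
   The LCB rule makes the pulled arm's influence (n_t A)_{i_t} exceed that of
   any arm by at most 2 |l1|_oo + 2 + 2 c_t, c_t its staleness counter.
   Averaging over the comparator's pulls and using 2 x A y^T <= x A x^T + y A y^T
   with x = n_t, y = (t/T) m_T, the normalized potential
   g_t = (n_t A n_t^T - t^2 q) / t, q = m_T A m_T^T / T^2, grows by at most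
   (4 |l1|_oo + 5 + 4 c_t) / (t + 1) per round.  The harmonic terms sum to at
   most log T, and c_t / (t + 1) is dominated by the increase of
   sum_i log (1 + last pull time of i), which is at most K log T. *)

Lemma divB_le_lnB (R : realType) (y z : R) : 0 < y -> 0 < z ->
  (y - z) / y <= ln y - ln z.
Proof.
move=> y0 z0.
have zy0 : -1 < z / y - 1 by have := divr_gt0 z0 y0; lra.
have := le_ln1Dx zy0; rewrite addrC subrK ln_div ?posrE //.
have -> : (y - z) / y = 1 - z / y by rewrite mulrBl divff ?gt_eqF.
lra.
Qed.

Lemma harmonic_le_ln (R : realType) (T : nat) : (0 < T)%N ->
  \sum_(1 <= n < T) (n.+1%:R : R)^-1 <= ln T%:R.
Proof.
move=> T0; have := telescope_sumr (fun n => ln (n%:R : R)) T0.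
rewrite /= ln1 subr0 => <-; apply: ler_sum_nat => n /andP[n0 _].
have := @divB_le_lnB R n.+1%:R n%:R; rewrite -natrB // subSnn div1r.
by apply; rewrite ltr0n.
Qed.

Lemma ler_telescope (R : numDomainType) (f d : nat -> R) m n : (m <= n)%N ->
  (forall k, (m <= k < n)%N -> f k.+1 <= f k + d k) ->
  f n <= f m + \sum_(m <= k < n) d k.
Proof.
move=> mn step; rewrite -lerBlDl -telescope_sumr //.
by apply: ler_sum_nat => k /step; rewrite lerBlDl.
Qed.

Lemma potential_step (R : realFieldType) (n P P' v e q : R) : 0 < n -> 0 <= q ->
  P' <= P + 2 * v + 1 -> 2 * n * v <= P + n ^+ 2 * q + 2 * n * e ->
  (P' - (n + 1) ^+ 2 * q) / (n + 1) <= (P - n ^+ 2 * q) / n + (2 * e + 1) / (n + 1).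
Proof.
move=> n0 q0 hP' hv; set g := (P - n ^+ 2 * q) / n.
have n1 : 0 < n + 1 by lra.
have Pg : P = n * g + n ^+ 2 * q by rewrite /g mulrC divfK ?gt_eqF //; ring.
clearbody g.
have {}hv : v <= g / 2 + n * q + e.
  rewrite -(ler_pM2l (_ : 0 < 2 * n)); last by lra.
  have -> : 2 * n * (g / 2 + n * q + e) = n * g + 2 * n ^+ 2 * q + 2 * n * e.
    by field.
  lra.
rewrite ler_pdivrMr // mulrDl divfK ?gt_eqF //.
have : 0 <= n * q by exact: mulr_ge0 (ltW n0) q0.
rewrite Pg in hP'; nra.
Qed.

Lemma ler_sum_const (R : numDomainType) T (F : 'I_T -> R) c :
  (forall t, F t <= c) -> \sum_(t < T) F t <= T%:R * c.
Proof.
by move=> Fc; rewrite mulr_natl -[in X in _ *+ X](card_ord T) -sumr_const; apply: ler_sum.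
Qed.

Lemma ler_const_sum (R : numDomainType) T (F : 'I_T -> R) c :
  (forall t, c <= F t) -> T%:R * c <= \sum_(t < T) F t.
Proof.
by move=> Fc; rewrite mulr_natl -[in X in _ *+ X](card_ord T) -sumr_const; apply: ler_sum.
Qed.

Lemma linf_ge (R : realType) (K : nat) (v : 'I_K -> R) i : `|v i| <= linf v.
Proof. exact: le_bigmax. Qed.

Lemma linf_ge0 (R : realType) (K : nat) (v : 'I_K -> R) : 0 <= linf v.
Proof. exact: bigmax_ge_id. Qed.

Section MxForm.
Variables (R : comPzRingType) (n : nat) (A : 'M[R]_n).

Definition mxform (x y : 'rV[R]_n) : R := (x *m A *m y^T) 0 0.

Lemma mxformDl x x' y : mxform (x + x') y = mxform x y + mxform x' y.
Proof. by rewrite /mxform !mulmxDl mxE. Qed.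

Lemma mxformDr x y y' : mxform x (y + y') = mxform x y + mxform x y'.
Proof. by rewrite /mxform linearD mulmxDr mxE. Qed.

Lemma mxformBl x x' y : mxform (x - x') y = mxform x y - mxform x' y.
Proof. by rewrite /mxform !mulmxBl !mxE. Qed.

Lemma mxformBr x y y' : mxform x (y - y') = mxform x y - mxform x y'.
Proof. by rewrite /mxform linearB mulmxBr !mxE. Qed.

Lemma mxformZl a x y : mxform (a *: x) y = a * mxform x y.
Proof. by rewrite /mxform -!scalemxAl mxE. Qed.

Lemma mxformZr a x y : mxform x (a *: y) = a * mxform x y.
Proof. by rewrite /mxform linearZ /= -scalemxAr mxE. Qed.

Lemma mxform0r x : mxform x 0 = 0.
Proof. by rewrite /mxform trmx0 mulmx0 mxE. Qed.

Lemma mxform_deltar x j : mxform x (delta_mx 0 j) = (x *m A) 0 j.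
Proof. by rewrite /mxform trmx_delta -colE mxE. Qed.

Lemma delta_mulmx i j : (delta_mx 0 i *m A : 'rV_n) 0 j = A i j.
Proof. by rewrite -rowE mxE. Qed.

Lemma mxform_sym : A^T = A -> forall x y, mxform x y = mxform y x.
Proof.
move=> sA x y; rewrite /mxform; transitivity ((x *m A *m y^T)^T 0 0).
  by rewrite [RHS]mxE.
by rewrite !trmx_mul sA trmxK mulmxA.
Qed.

End MxForm.

Lemma mxform_cross (R : numDomainType) n (A : 'M[R]_n) : A^T = A ->
  (forall x, 0 <= mxform A x x) -> forall x y, 2 * mxform A x y <= mxform A x x + mxform A y y.
Proof.
move=> sA psd x y; rewrite -subr_ge0.
have -> : mxform A x x + mxform A y y - 2 * mxform A x y = mxform A (x - y) (x - y).
  by rewrite mxformBl !mxformBr (mxform_sym sA y x); ring.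
exact: psd.
Qed.

Definition pulls (R : pzSemiRingType) (K : nat) (s : nat -> 'I_K) (t : nat) : 'rV[R]_K :=
  \sum_(u < t) delta_mx 0 (s u).
Arguments pulls {R K}.

Lemma pulls0 (R : pzSemiRingType) K (s : nat -> 'I_K) : pulls s 0 = 0 :> 'rV[R]_K.
Proof. exact: big_ord0. Qed.

Lemma pullsS (R : pzSemiRingType) K (s : nat -> 'I_K) t :
  pulls s t.+1 = pulls s t + delta_mx 0 (s t) :> 'rV[R]_K.
Proof. exact: big_ord_recr. Qed.

Section PullsForm.
Variables (R : comPzRingType) (K : nat) (A : 'M[R]_K).

Lemma mxform_pullsr x (j : nat -> 'I_K) T :
  mxform A x (pulls j T) = \sum_(w < T) (x *m A) 0 (j w).
Proof.
elim: T => [|T IH]; first by rewrite pulls0 mxform0r big_ord0.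
by rewrite pullsS mxformDr IH mxform_deltar big_ord_recr.
Qed.

Lemma mxform_pullsS (s : nat -> 'I_K) t : A^T = A ->
  mxform A (pulls s t.+1) (pulls s t.+1) =
  mxform A (pulls s t) (pulls s t) + 2 * (pulls s t *m A) 0 (s t) + A (s t) (s t).
Proof.
move=> sA; rewrite pullsS mxformDl !mxformDr (mxform_sym sA (delta_mx _ _)) !mxform_deltar.
by rewrite delta_mulmx; ring.
Qed.

End PullsForm.

Section Losses.
Variables (R : realType) (K : nat) (A : 'M[R]_K) (l1 : 'I_K -> R).

Lemma loss_pulls s t k : loss A l1 s t k = l1 k + (pulls s t *m A) 0 k.
Proof.
elim: t => [|t IH] /=; first by rewrite pulls0 mul0mx mxE addr0.
by rewrite IH pullsS mulmxDl -addrA [in RHS]mxE delta_mulmx.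
Qed.

Lemma cum_loss_mxform s T : A^T = A ->
  cum_loss A l1 s T = \sum_(t < T) l1 (s t) +
    (mxform A (pulls s T) (pulls s T) - \sum_(t < T) A (s t) (s t)) / 2.
Proof.
move=> sA; elim: T => [|T IH].
  by rewrite /cum_loss !big_ord0 pulls0 mxform0r; field.
rewrite /cum_loss big_ord_recr -/(cum_loss _ _ _ _) IH /= loss_pulls mxform_pullsS //.
by rewrite !big_ord_recr /=; field.
Qed.

Hypothesis A1 : forall i j, `|A i j| <= 1.

Lemma loss_lipschitz s t d k :
  `|loss A l1 s (t + d) k - loss A l1 s t k| <= d%:R.
Proof.
elim: d => [|d IH]; first by rewrite addn0 subrr normr0.
rewrite addnS /= -addrAC -natr1; apply: le_trans (ler_normD _ _) _.
exact: lerD.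
Qed.

End Losses.

Section LCBRun.
Variables (R : realType) (K : nat) (A : 'M[R]_K) (l1 : 'I_K -> R) (xi : nat -> R)
  (s : nat -> 'I_K).

Local Notation est t i := ((lcb_state A l1 xi s t).1 i).
Local Notation ctr t i := ((lcb_state A l1 xi s t).2 i).

Lemma lcb_state_inv t i : (ctr t i <= t)%N /\
  (est t i = -oo%E /\ ctr t i = t \/
   [/\ (0 < ctr t i)%N, s (t - ctr t i) = i & est t i = (obs A l1 xi s (t - ctr t i))%:E]).
Proof.
elim: t => [|t [ct IH]] /=; first by split=> //; left.
case: eqP => [->|_]; first by split=> //; right; rewrite subSS subn0.
by split=> //; case: IH => [[-> ->]|[c0 si ->]]; [left | right; rewrite subSS].
Qed.

(* [t - ctr t i] is the round at which [i] was last pulled, or 0 if never. *)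
Definition lcb_pot t : R := \sum_(i < K) ln (t - ctr t i).+1%:R.

Lemma lcb_pot_step t : (ctr t (s t))%:R / t.+1%:R <= lcb_pot t.+1 - lcb_pot t.
Proof.
rewrite /lcb_pot (bigD1 (s t)) //= [X in _ - X](bigD1 (s t)) //= eqxx subSS subn0.
have -> : \sum_(i < K | i != s t) ln (t.+1 - (if i == s t then 1 else (ctr t i).+1)).+1%:R
       = \sum_(i < K | i != s t) ln ((t - ctr t i).+1%:R : R).
  by apply: eq_bigr => i /negbTE ->; rewrite subSS.
have [ct _] := lcb_state_inv t (s t).
have := @divB_le_lnB R t.+1%:R (t - ctr t (s t)).+1%:R.
rewrite !ltr0n => /(_ isT isT); rewrite -natrB ?ltnS ?leq_subr // subSS subKn //.
by rewrite opprD addrACA subrr addr0.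
Qed.

Lemma lcb_ctr_sum_le T : (0 < T)%N ->
  \sum_(t < T) (ctr t (s t))%:R / t.+1%:R <= K%:R * ln (T%:R : R).
Proof.
move=> T0; apply: (@le_trans _ _ (lcb_pot T)).
  have pot0 : lcb_pot 0 = 0 by rewrite /lcb_pot big1 // => i _; rewrite /= ln1.
  have <- : \sum_(t < T) (lcb_pot t.+1 - lcb_pot t) = lcb_pot T.
    rewrite -(big_mkord xpredT (fun t => lcb_pot t.+1 - lcb_pot t)).
    by rewrite telescope_sumr // pot0 subr0.
  by apply: ler_sum => t _; exact: lcb_pot_step.
apply: ler_sum_const => i; have [_ c0] := lcb_state_inv T i.
rewrite ler_ln ?posrE ?ltr0n // ler_nat ltn_subrL T0 andbT.
by case: c0 => [[_ ->]|[]].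
Qed.

Hypothesis A1 : forall i j, `|A i j| <= 1.
Hypothesis xi1 : forall t, `|xi t| <= 1.

Lemma lcb_index_bounds t i :
  lcb_index A l1 xi s t i = -oo%E /\ ctr t i = t \/
  exists2 r, lcb_index A l1 xi s t i = r%:E &
    loss A l1 s t i - 2 * (ctr t i)%:R - 1 <= r <= loss A l1 s t i + 1.
Proof.
rewrite /lcb_index; have [ct [[-> ->]|[c0 si ->]]] := lcb_state_inv t i; first by left.
right; exists (obs A l1 xi s (t - ctr t i) - (ctr t i)%:R) => //.
have := loss_lipschitz l1 A1 s (t - ctr t i) (ctr t i) i; rewrite subnK //.
rewrite /obs si; have := xi1 (t - ctr t i).
by rewrite !ler_norml => /andP[? ?] /andP[? ?]; apply/andP; split; lra.
Qed.

Lemma lcb_choice_bound T t k : is_lcb_run A l1 xi s T -> (t < T)%N ->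
  (pulls s t *m A) 0 (s t) <= (pulls s t *m A) 0 k + 2 * linf l1 + 2 + 2 * (ctr t (s t))%:R.
Proof.
move=> run tT; have L0 := linf_ge0 l1.
have := linf_ge l1 (s t); have := linf_ge l1 k; rewrite !ler_norml.
move=> /andP[? ?] /andP[? ?]; have := run t tT k.
have [[-> ->] _|[r -> hr]] := lcb_index_bounds t (s t).
  have := loss_lipschitz l1 A1 s 0 t (s t); have := loss_lipschitz l1 A1 s 0 t k.
  rewrite /= !loss_pulls !ler_norml => /andP[? ?] /andP[? ?]; lra.
have [[-> _]|[r' -> /andP[_ hr']]] := lcb_index_bounds t k; first by [].
move: hr; rewrite lee_fin !loss_pulls => /andP[? _]; move: hr'; rewrite loss_pulls; lra.
Qed.

End LCBRun.

Section LCBGap.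
Variables (R : realType) (K : nat) (A : 'M[R]_K) (l1 : 'I_K -> R) (xi : nat -> R)
  (s : nat -> 'I_K) (T : nat) (j : nat -> 'I_K).
Hypotheses (sA : A^T = A) (psd : forall x, 0 <= mxform A x x).
Hypotheses (A1 : forall i k, `|A i k| <= 1) (xi1 : forall t, `|xi t| <= 1).
Hypotheses (run : is_lcb_run A l1 xi s T) (T0 : (0 < T)%N).

Local Notation ctr t i := ((lcb_state A l1 xi s t).2 i).
Local Notation P n := (mxform A (pulls s n) (pulls s n)).
Local Notation q := (mxform A (pulls j T) (pulls j T) / T%:R ^+ 2).
Local Notation g n := ((P n - n%:R ^+ 2 * q) / n%:R).

Lemma lcb_gap_step n : (0 < n < T)%N ->
  g n.+1 <= g n + (4 * linf l1 + 5 + 4 * (ctr n (s n))%:R) / n.+1%:R.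
Proof.
move=> /andP[n0 nT]; set v : R := (pulls s n *m A) 0 (s n).
set e := 2 * linf l1 + 2 + 2 * (ctr n (s n))%:R.
have q0 : 0 <= q by rewrite divr_ge0 ?exprn_ge0.
have hP : P n.+1 <= P n + 2 * v + 1.
  by rewrite mxform_pullsS // lerD2l; have := A1 (s n) (s n); rewrite ler_norml => /andP[].
have hv : 2 * n%:R * v <= P n + n%:R ^+ 2 * q + 2 * n%:R * e.
  pose a : R := n%:R / T%:R; have T0' : (0 : R) < T%:R by rewrite ltr0n.
  have a0 : 0 <= a by rewrite divr_ge0.
  have cross := mxform_cross sA psd (pulls s n) (a *: pulls j T).
  rewrite !mxformZr mxformZl in cross.
  have : T%:R * (v - e) <= mxform A (pulls s n) (pulls j T).
    rewrite mxform_pullsr; apply: ler_const_sum => w.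
    by rewrite lerBlDr /e 2!addrA; exact: (lcb_choice_bound A1 xi1 (j w) run nT).
  have aT : a * T%:R = n%:R by rewrite /a divfK // lt0r_neq0.
  move/(ler_wpM2l a0); rewrite [a * (_ * _)]mulrA aT.
  have aa : a * (a * mxform A (pulls j T) (pulls j T)) = n%:R ^+ 2 * q.
    by rewrite /a; field; rewrite lt0r_neq0.
  rewrite aa in cross; lra.
have := potential_step (_ : 0 < n%:R) q0 hP hv; rewrite ltr0n (natr1 n) => /(_ n0).
by rewrite /e; congr (_ <= _ + _ / _); ring.
Qed.

Lemma lcb_gap : P T - mxform A (pulls j T) (pulls j T) <=
  T%:R * (1 + (4 * linf l1 + 5) * ln T%:R + 4 * K%:R * ln T%:R).
Proof.
have T0' : (0 : R) < T%:R by rewrite ltr0n.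
have q0 : 0 <= q by rewrite divr_ge0 ?exprn_ge0.
have g1 : g 1 <= 1.
  rewrite divr1 expr1n mul1r mxform_pullsS // pulls0 mxform0r mul0mx mxE mulr0 !add0r.
  by have := A1 (s 0) (s 0); rewrite ler_norml => /andP[_]; lra.
have := ler_telescope T0 lcb_gap_step.
rewrite (eq_bigr (fun n =>
  (4 * linf l1 + 5) * n.+1%:R^-1 + 4 * ((ctr n (s n))%:R / n.+1%:R))); last first.
  by move=> n _; rewrite mulrDl mulrA.
rewrite big_split /= -!mulr_sumr.
have H := @harmonic_le_ln R T T0.
have C : \sum_(1 <= n < T) (ctr n (s n))%:R / n.+1%:R <= K%:R * ln (T%:R : R).
  apply: (le_trans _ (lcb_ctr_sum_le A l1 xi s T0)).
  rewrite -(big_mkord xpredT (fun t => (ctr t (s t))%:R / t.+1%:R)) big_ltn //=.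
  by rewrite lerDr divr_ge0.
have -> : P T - mxform A (pulls j T) (pulls j T) = T%:R * g T.
  by field; rewrite lt0r_neq0.
have L0 := linf_ge0 l1; have lnT0 : 0 <= ln (T%:R : R) by rewrite ln_ge0 // ler1n.
have H' : (4 * linf l1 + 5) * \sum_(1 <= n < T) (n.+1%:R : R)^-1 <=
    (4 * linf l1 + 5) * ln T%:R by rewrite ler_wpM2l //; lra.
move=> gT; rewrite ler_pM2l //; lra.
Qed.
End LCBGap.

Theorem theorem4 (R : realType) (K : nat) (A : 'M[R]_K) (l1 : 'I_K -> R)
  (xi : nat -> R) (s : nat -> 'I_K) (T : nat) :
  A^T = A ->
  (forall x : 'rV[R]_K, 0 <= (x *m A *m x^T) 0 0) ->
  (forall i j, `|A i j| <= 1) ->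
  (forall t, `|xi t| <= 1) ->
  (K.+1 <= T)%N ->
  is_lcb_run A l1 xi s T ->
  forall j : nat -> 'I_K,
    cum_loss A l1 s T - cum_loss A l1 j T <=
      ((5 * K%:R + 3) / 2 + 2 * linf l1) * T%:R
      + (2 * K%:R + 2 * linf l1 + 4) * T%:R * ln T%:R.
Proof.
move=> sA psd A1 xi1 KT run j; have T0 : (0 < T)%N := leq_ltn_trans (leq0n K) KT.
have gap := lcb_gap j sA psd A1 xi1 run T0.
have l1_diff : \sum_(t < T) l1 (s t) - \sum_(t < T) l1 (j t) <= T%:R * (2 * linf l1).
  rewrite -sumrB; apply: ler_sum_const => t; have := linf_ge l1 (s t); have := linf_ge l1 (j t).
  by rewrite !ler_norml => /andP[? ?] /andP[? ?]; lra.
have diag_diff : \sum_(t < T) A (j t) (j t) - \sum_(t < T) A (s t) (s t) <= T%:R * 2.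
  rewrite -sumrB; apply: ler_sum_const => t; have := A1 (s t) (s t); have := A1 (j t) (j t).
  by rewrite !ler_norml => /andP[? ?] /andP[? ?]; lra.
rewrite !cum_loss_mxform //.
have L0 := linf_ge0 l1; have lnT0 : 0 <= ln (T%:R : R) by rewrite ln_ge0 // ler1n.
have TlnT : 0 <= T%:R * ln (T%:R : R) by rewrite mulr_ge0.
have TK : 0 <= T%:R * K%:R :> R by rewrite mulr_ge0.
nra.
Qed.
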